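(* Let $L$ and $N$ be positive integers with $N\le L$, and let $U$ be real with $L > \frac{8}{U}$. Consider the Lieb-Wu equations with one down spin in the unknowns $k_1,\dots,k_N$ and $\Lambda$: $$e^{i k_j L} = \frac{\Lambda - \sin k_j - iU/4}{\Lambda - \sin k_j + iU/4},\quad j=1,\dots,N,\qquad \prod_{j=1}^N \frac{\Lambda - \sin k_j - iU/4}{\Lambda - \sin k_j + iU/4} = 1.$$ Then there are precisely $\binom{L}{N}(N-1)$ solutions with all $k_j$ real. More precisely, to every choice of $N$ mutually distinct intervals $\mathcal{I}_j = [(\ell_j-1)\frac{2\pi}{L}, \ell_j\frac{2\pi}{L}]$, $j=1,\dots,N$, with $\ell_j\in\{1,\dots,L\}$ and $\ell_j\ne\ell_k$ for $j\neq k$, there correspond exactly $N-1$ solutions with $k_j\in\mathcal{I}_j$ for all $j$, and these solutions are characterized by $N-1$ different values of $\Lambda$.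
   Context: Solutions are counted modulo permutations of the $k_j$, with the $k_j$ required to be mutually distinct and taken in $[0,2\pi)$ (they matter only modulo $2\pi$), and with $\Lambda$ a finite real number ($\Lambda=\pm\infty$ excluded). *)

From Stdlib Require Import Reals.
From Coquelicot Require Import Coquelicot.
From mathcomp Require binomial.

Open Scope R_scope.

Definition expi (t : R) : C := (cos t, sin t).

Definition lw_ratio (U Λ k : R) : C :=
  ((RtoC (Λ - sin k) - Ci * RtoC (U / 4)) / (RtoC (Λ - sin k) + Ci * RtoC (U / 4)))%C.

Fixpoint Cprod (n : nat) (f : nat -> C) : C :=
  match n with
  | O => RtoC 1
  | S m => (Cprod m f * f m)%C
  end.

(* Lieb-Wu equations with one down spin, unknowns k_0..k_{N-1} (indices
   shifted by one w.r.t. the paper) and Λ. *)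
Definition LiebWu (L N : nat) (U : R) (k : nat -> R) (Λ : R) : Prop :=
  (forall j, (j < N)%nat -> expi (k j * INR L) = lw_ratio U Λ (k j)) /\
  Cprod N (fun j => lw_ratio U Λ (k j)) = RtoC 1.

Definition real_solution (L N : nat) (U : R) (k : nat -> R) (Λ : R) : Prop :=
  (forall j, (j < N)%nat -> 0 <= k j < 2 * PI) /\
  (forall j j', (j < N)%nat -> (j' < N)%nat -> j <> j' -> k j <> k j') /\
  LiebWu L N U k Λ.

(* canonical representative modulo permutations: k_0 < k_1 < ... < k_{N-1} *)
Definition sorted_real_solution (L N : nat) (U : R) (k : nat -> R) (Λ : R) : Prop :=
  real_solution L N U k Λ /\ (forall j, (S j < N)%nat -> k j < k (S j)).

Definition has_exactly (N n : nat) (P : (nat -> R) -> R -> Prop) : Prop :=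
  exists (ks : nat -> nat -> R) (Λs : nat -> R),
    (forall i, (i < n)%nat -> P (ks i) (Λs i)) /\
    (forall i i', (i < n)%nat -> (i' < n)%nat -> i <> i' ->
        ~ (Λs i = Λs i' /\ forall j, (j < N)%nat -> ks i j = ks i' j)) /\
    (forall k Λ, P k Λ ->
        exists i, (i < n)%nat /\ Λ = Λs i /\ forall j, (j < N)%nat -> k j = ks i j).

Definition in_interval (L l : nat) (x : R) : Prop :=
  (INR l - 1) * (2 * PI / INR L) <= x <= INR l * (2 * PI / INR L).

From Stdlib Require Import Reals Lra Lia ZArith ClassicalEpsilon.
From Coquelicot Require Import Coquelicot.
From mathcomp Require binomial.

Open Scope R_scope.

(* Write the Lieb-Wu ratio as e^{-iθ(Λ - sin k)} with θ(a) = π - 2 atan(4a/U) in (0, 2π).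
   For fixed Λ the counting function z(k) = kL + θ(Λ - sin k) has slope between L - 8/U > 0
   and L + 8/U, so the equation z(k) ∈ 2πℤ has exactly one root r_m(Λ) in each open cell
   ((m-1)2π/L, m2π/L), and every root in [0, 2π) lies in one of the cells m = 1..L.
   The root r_m(Λ) is increasing and Lipschitz in Λ, so for cells l_0, ..., l_{N-1} the total
   phase S(Λ) = Σ_j θ(Λ - sin r_{l_j}(Λ)) = Σ_j (2π l_j - L r_{l_j}(Λ)) is continuous and
   strictly decreasing, takes values in (0, 2πN), and approaches 2πN as Λ → -∞ and 0 as
   Λ → +∞.  The product equation says S(Λ) ∈ 2πℤ, so for distinct cells there are exactly the
   N - 1 solutions S(Λ) = 2πm, 1 <= m <= N - 1.  A sorted solution has strictly increasing
   cells, and summing over the binom(L, N) increasing cell sequences (by Pascal's rule) gives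
   the total count. *)

(** * The phase of the Lieb-Wu ratio *)

Definition lw_phase (U a : R) : R := PI - 2 * atan (a / (U / 4)).

Lemma lw_phase_bounds U a : 0 < lw_phase U a < 2 * PI.
Proof. unfold lw_phase. pose proof (atan_bound (a / (U / 4))). lra. Qed.

Lemma lw_phase_opp U a : lw_phase U (- a) = 2 * PI - lw_phase U a.
Proof.
  unfold lw_phase. replace (- a / (U / 4)) with (- (a / (U / 4))) by (unfold Rdiv; ring).
  rewrite atan_opp. ring.
Qed.

Lemma expi_add a b : (expi a * expi b)%C = expi (a + b).
Proof.
  unfold expi, Cmult; simpl. rewrite cos_plus, sin_plus.
  apply injective_projections; simpl; ring.
Qed.

Lemma lw_ratio_phase U Λ k : 0 < U -> lw_ratio U Λ k = expi (- lw_phase U (Λ - sin k)).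
Proof.
  intros hU. unfold lw_ratio, lw_phase, expi.
  set (v := U / 4). set (x := (Λ - sin k) / v).
  assert (hv : 0 < v) by (unfold v; lra).
  replace (Λ - sin k) with (x * v) by (unfold x; field; lra).
  set (t := atan x).
  assert (hc : 0 < cos t) by (apply cos_gt_0; unfold t; pose proof (atan_bound x); lra).
  assert (hs : sin t = x * cos t).
  { pose proof (tan_atan x) as e. fold t in e. unfold tan in e.
    rewrite <- e. field. lra. }
  assert (hc2 : cos t ^ 2 = / (1 + x ^ 2)).
  { pose proof (sin2_cos2 t) as e. unfold Rsqr in e. rewrite hs in e.
    apply (Rmult_eq_reg_r (1 + x ^ 2)); [rewrite Rinv_l; nra | nra]. }
  replace (- (PI - 2 * t)) with (2 * t - PI) by ring.
  rewrite cos_minus, sin_minus, cos_PI, sin_PI, cos_2a, sin_2a, hs.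
  unfold Cdiv, Cinv, Cmult, Cminus, Cplus, Copp, RtoC, Ci; simpl.
  apply injective_projections; simpl.
  all: field_simplify_eq; [rewrite hc2; field; nra | nra].
Qed.

Lemma cos_sin_2PI_IZR z : cos (2 * PI * IZR z) = 1 /\ sin (2 * PI * IZR z) = 0.
Proof.
  assert (h : sin (IZR z * PI) = 0) by (apply sin_eq_0_1; exists z; reflexivity).
  replace (2 * PI * IZR z) with (2 * (IZR z * PI)) by ring.
  rewrite cos_2a_sin, sin_2a, h. split; ring.
Qed.

Lemma expi_eq_iff a b : expi a = expi b <-> exists z : Z, a = b + 2 * PI * IZR z.
Proof.
  split.
  - intros H. unfold expi in H. injection H as hc hs.
    assert (h0 : sin (a - b) = 0) by (rewrite sin_minus, hc, hs; ring).
    assert (h1 : cos (a - b) = 1).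
    { rewrite cos_minus, hc, hs. pose proof (sin2_cos2 b). unfold Rsqr in *. lra. }
    destruct (sin_eq_0_0 _ h0) as [n hn].
    destruct (Z.Even_or_Odd n) as [[q ->] | [q ->]].
    + exists q. rewrite mult_IZR in hn. lra.
    + exfalso. rewrite plus_IZR, mult_IZR in hn. rewrite hn in h1.
      replace ((2 * IZR q + 1) * PI) with (2 * PI * IZR q + PI) in h1 by ring.
      rewrite neg_cos, (proj1 (cos_sin_2PI_IZR q)) in h1. lra.
  - intros [z ->]. destruct (cos_sin_2PI_IZR z) as [hc hs]. unfold expi.
    rewrite cos_plus, sin_plus, hc, hs. apply injective_projections; simpl; ring.
Qed.

Lemma lw_phase_small U ε : 0 < U -> 0 < ε -> exists A, forall a, A <= a -> lw_phase U a < ε.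
Proof.
  intros hU hε. pose proof PI_RGT_0 as hpi.
  assert (hmin : 0 < Rmin ε PI <= ε) by (split; [apply Rmin_glb_lt | apply Rmin_l]; lra).
  set (t := PI / 2 - Rmin ε PI / 4).
  assert (ht : - (PI / 2) < t < PI / 2) by (unfold t; pose proof (Rmin_r ε PI); lra).
  exists (U / 4 * tan t). intros a ha.
  assert (hq : tan t <= a / (U / 4)) by (apply (Rle_div_r (tan t) a (U / 4)); lra).
  assert (hat : t <= atan (a / (U / 4))).
  { rewrite <- (atan_tan t ht) at 1.
    destruct (Rle_lt_or_eq_dec _ _ hq) as [h | ->]; [left; apply atan_increasing, h | lra]. }
  unfold lw_phase, t in *. lra.
Qed.

Lemma lw_phase_large U ε : 0 < U -> 0 < ε ->
  exists A, forall a, a <= - A -> 2 * PI - ε < lw_phase U a.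
Proof.
  intros hU hε. destruct (lw_phase_small U ε hU hε) as [A hA]. exists A. intros a ha.
  replace a with (- - a) by ring. rewrite lw_phase_opp.
  specialize (hA (- a) ltac:(lra)). lra.
Qed.

Lemma atan_increment x y : x <= y -> 0 <= atan y - atan x <= y - x.
Proof.
  intros hxy. destruct (Req_dec x y) as [-> | hne]; [lra |].
  destruct (MVT_cor1 atan x y derivable_pt_atan ltac:(lra)) as [c [hc _]].
  rewrite derive_pt_atan in hc. rewrite hc.
  assert (0 < 1 / (1 + c²) <= 1).
  { assert (0 <= c²) by apply Rle_0_sqr. split.
    - apply Rdiv_lt_0_compat; lra.
    - apply Rmult_le_reg_r with (1 + c²); [lra |].
      field_simplify; lra. }
  nra.
Qed.

Lemma sin_lipschitz x y : Rabs (sin y - sin x) <= Rabs (y - x).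
Proof.
  assert (W : forall a b, a < b -> Rabs (sin b - sin a) <= Rabs (b - a)).
  { intros a b hab. destruct (MVT_cor1 sin a b derivable_sin hab) as [c [hc _]].
    rewrite hc, (pr_nu sin c _ (derivable_pt_sin c)), derive_pt_sin, Rabs_mult.
    pose proof (Rabs_pos (b - a)).
    assert (Rabs (cos c) <= 1) by (apply Rabs_le, COS_bound). nra. }
  destruct (Rtotal_order x y) as [h | [-> | h]].
  - auto.
  - rewrite !Rminus_diag, Rabs_R0. lra.
  - rewrite (Rabs_minus_sym (sin y)), (Rabs_minus_sym y). auto.
Qed.

Lemma lw_phase_decrement U a b : 0 < U -> a < b ->
  0 < lw_phase U a - lw_phase U b <= 8 / U * (b - a).
Proof.
  intros hU hab. unfold lw_phase.
  assert (hq : a / (U / 4) < b / (U / 4)) by (apply Rmult_lt_compat_r; [apply Rinv_0_lt_compat |]; lra).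
  pose proof (atan_increasing _ _ hq). pose proof (atan_increment _ _ (Rlt_le _ _ hq)).
  replace (8 / U * (b - a)) with (2 * (b / (U / 4) - a / (U / 4))) by (field; lra).
  lra.
Qed.

Lemma lw_phase_lipschitz U a b : 0 < U ->
  Rabs (lw_phase U a - lw_phase U b) <= 8 / U * Rabs (a - b).
Proof.
  intros hU. destruct (Rtotal_order a b) as [h | [-> | h]].
  - pose proof (lw_phase_decrement U a b hU h).
    rewrite (Rabs_minus_sym a), Rabs_right, Rabs_right by lra. lra.
  - rewrite !Rminus_diag, Rabs_R0. lra.
  - pose proof (lw_phase_decrement U b a hU h).
    rewrite Rabs_minus_sym, Rabs_right, Rabs_right by lra. lra.
Qed.

Lemma lipschitz_continuity (f : R -> R) (C : R) :
  (forall x y, Rabs (f y - f x) <= C * Rabs (y - x)) -> continuity f.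
Proof.
  intros H x eps heps.
  assert (hC : 0 <= C).
  { specialize (H 0 1). rewrite Rminus_0_r, Rabs_R1 in H. pose proof (Rabs_pos (f 1 - f 0)). lra. }
  exists (eps / (C + 1)). split; [apply Rdiv_lt_0_compat; lra |].
  intros y [_ hy]. simpl in *. unfold R_dist in *.
  apply Rle_lt_trans with (C * Rabs (y - x)); [apply H |].
  apply Rle_lt_trans with ((C + 1) * Rabs (y - x)); [pose proof (Rabs_pos (y - x)); nra |].
  apply (Rmult_lt_compat_l (C + 1)) in hy; [| lra].
  replace ((C + 1) * (eps / (C + 1))) with eps in hy by (field; lra). exact hy.
Qed.

Lemma continuity_intermediate_value (f : R -> R) a b y :
  continuity f -> f a < y < f b -> exists x, f x = y.
Proof.
  intros hf [ha hb]. destruct (Rtotal_order a b) as [h | [-> | h]].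
  - destruct (IVT (fun x => f x - y) a b) as [x [_ hx]]; try (simpl; lra).
    { apply continuity_minus; [exact hf | apply continuity_const; intros ? ?; reflexivity]. }
    exists x. lra.
  - lra.
  - destruct (IVT (fun x => y - f x) b a) as [x [_ hx]]; try (simpl; lra).
    { apply continuity_minus; [apply continuity_const; intros ? ?; reflexivity | exact hf]. }
    exists x. lra.
Qed.

Lemma INR_close_eq m n : INR m - 1 < INR n < INR m + 1 -> m = n.
Proof.
  intros [h1 h2].
  assert (n < S m)%nat by (apply INR_lt; rewrite S_INR; lra).
  assert (m < S n)%nat by (apply INR_lt; rewrite S_INR; lra).
  lia.
Qed.

Lemma IZR_pos_INR z : 0 < IZR z -> exists m : nat, (1 <= m)%nat /\ IZR z = INR m.
Proof.
  intros hz. apply lt_0_IZR in hz. exists (Z.to_nat z). split; [lia |].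
  rewrite INR_IZR_INZ, Z2Nat.id by lia. reflexivity.
Qed.

Fixpoint Rsum (n : nat) (f : nat -> R) : R :=
  match n with O => 0 | S m => Rsum m f + f m end.

Lemma Rsum_ext n f g : (forall j, (j < n)%nat -> f j = g j) -> Rsum n f = Rsum n g.
Proof.
  induction n as [| n IH]; simpl; intros H; [reflexivity |].
  rewrite IH by (intros; apply H; lia). rewrite H by lia. reflexivity.
Qed.

Lemma Rsum_opp n f : Rsum n (fun j => - f j) = - Rsum n f.
Proof. induction n as [| n IH]; simpl; [ring | rewrite IH; ring]. Qed.

Lemma Rsum_const n c : Rsum n (fun _ => c) = INR n * c.
Proof. induction n as [| n IH]; simpl Rsum; [simpl; ring | rewrite IH, S_INR; ring]. Qed.

Lemma Rsum_lt n f g : (1 <= n)%nat -> (forall j, (j < n)%nat -> f j < g j) ->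
  Rsum n f < Rsum n g.
Proof.
  intros hn H. destruct n as [| n]; [lia |]. clear hn.
  induction n as [| n IH]; simpl in *.
  - specialize (H 0%nat ltac:(lia)). lra.
  - specialize (IH (fun j hj => H j ltac:(lia))). specialize (H (S n) ltac:(lia)). lra.
Qed.

Lemma Rsum_continuity n (F : nat -> R -> R) : (forall j, (j < n)%nat -> continuity (F j)) ->
  continuity (fun x => Rsum n (fun j => F j x)).
Proof.
  induction n as [| n IH]; simpl; intros H.
  - apply continuity_const. intros ? ?; reflexivity.
  - apply (continuity_plus (fun x => Rsum n (fun j => F j x)) (F n)).
    + apply IH. intros; apply H; lia.
    + apply H; lia.
Qed.

Lemma Cprod_ext n f g : (forall j, (j < n)%nat -> f j = g j) -> Cprod n f = Cprod n g.
Proof.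
  induction n as [| n IH]; simpl; intros H; [reflexivity |].
  rewrite IH by (intros; apply H; lia). rewrite H by lia. reflexivity.
Qed.

Lemma Cprod_expi n f : Cprod n (fun j => expi (f j)) = expi (Rsum n f).
Proof.
  induction n as [| n IH]; simpl.
  - unfold expi. rewrite cos_0, sin_0. reflexivity.
  - rewrite IH, expi_add. reflexivity.
Qed.

Lemma increasing_lt (t : nat -> nat) N : (forall j, (S j < N)%nat -> (t j < t (S j))%nat) ->
  forall j j', (j < j')%nat -> (j' < N)%nat -> (t j < t j')%nat.
Proof.
  intros h j j' hj. induction hj as [| j' hj IH]; intros hN.
  - apply h, hN.
  - specialize (IH ltac:(lia)). specialize (h j' hN). lia.
Qed.

(** * Cells *)

Definition in_open_cell (L m : nat) (x : R) : Prop :=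
  2 * PI * (INR m - 1) < x * INR L < 2 * PI * INR m.

Definition cell_index (L : nat) (x : R) : nat := Z.to_nat (up (x * INR L / (2 * PI))).

Lemma cell_index_open L m x : 0 < INR L -> in_open_cell L m x -> cell_index L x = m.
Proof.
  intros hL [h1 h2]. pose proof Rgt_2PI_0 as hpi. unfold cell_index.
  set (q := x * INR L / (2 * PI)).
  assert (hq : x * INR L = 2 * PI * q) by (unfold q; field; lra).
  rewrite hq in h1, h2.
  apply Rmult_lt_reg_l in h1, h2; try lra.
  rewrite <- (tech_up q (Z.of_nat m)); rewrite <- ?INR_IZR_INZ; try lra.
  apply Nat2Z.id.
Qed.

Lemma open_cell_unique L m m' x : 0 < INR L ->
  in_open_cell L m x -> in_open_cell L m' x -> m = m'.
Proof.
  intros hL h h'. rewrite <- (cell_index_open L m x), <- (cell_index_open L m' x); auto.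
Qed.

Lemma open_cell_lt L m m' x y : 0 < INR L -> (m < m')%nat ->
  in_open_cell L m x -> in_open_cell L m' y -> x < y.
Proof.
  intros hL hm [_ hx] [hy _].
  assert (INR m + 1 <= INR m') by (rewrite <- S_INR; apply le_INR; lia).
  pose proof Rgt_2PI_0.
  apply (Rmult_lt_reg_r (INR L)); [exact hL |]. nra.
Qed.

Lemma open_cell_le L m m' x y : 0 < INR L -> x < y ->
  in_open_cell L m x -> in_open_cell L m' y -> (m <= m')%nat.
Proof.
  intros hL hxy hx hy. destruct (Nat.le_gt_cases m m') as [h | h]; [exact h |].
  pose proof (open_cell_lt L m' m y x hL h hy hx). lra.
Qed.

Lemma open_cell_range L m x : 0 < INR L -> (1 <= m <= L)%nat ->
  in_open_cell L m x -> 0 < x < 2 * PI.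
Proof.
  intros hL [hm1 hmL] [h1 h2]. apply le_INR in hm1, hmL. simpl in hm1.
  pose proof PI_RGT_0. split; nra.
Qed.

Lemma in_interval_iff L m x : 0 < INR L ->
  in_interval L m x <-> 2 * PI * (INR m - 1) <= x * INR L <= 2 * PI * INR m.
Proof.
  intros hL. unfold in_interval.
  assert (e1 : (INR m - 1) * (2 * PI / INR L) * INR L = 2 * PI * (INR m - 1)) by (field; lra).
  assert (e2 : INR m * (2 * PI / INR L) * INR L = 2 * PI * INR m) by (field; lra).
  split; intros [h1 h2]; split.
  - rewrite <- e1. apply Rmult_le_compat_r; lra.
  - rewrite <- e2. apply Rmult_le_compat_r; lra.
  - apply (Rmult_le_reg_r (INR L)); lra.
  - apply (Rmult_le_reg_r (INR L)); lra.
Qed.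

Lemma open_cell_in_interval L m x : 0 < INR L -> in_open_cell L m x -> in_interval L m x.
Proof. intros hL [h1 h2]. apply in_interval_iff; lra. Qed.

Lemma in_interval_open_cell L l m x : 0 < INR L ->
  in_interval L l x -> in_open_cell L m x -> l = m.
Proof.
  intros hL hI [h1 h2]. apply in_interval_iff in hI as [h3 h4]; [| exact hL].
  pose proof Rgt_2PI_0. apply INR_close_eq. split.
  - apply (Rmult_lt_reg_l (2 * PI)); lra.
  - apply (Rmult_lt_reg_l (2 * PI)); lra.
Qed.

(** * The counting function and its roots *)

Section OneDownSpin.

Variables (L : nat) (U : R).
Hypothesis hU : 0 < U.
Hypothesis hLU : 8 / U < INR L.

Lemma INR_L_pos : 0 < INR L.
Proof. assert (0 < 8 / U) by (apply Rdiv_lt_0_compat; lra). lra. Qed.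

Definition counting_fun (Λ k : R) : R := k * INR L + lw_phase U (Λ - sin k).

Lemma counting_fun_increment Λ k k' : k < k' ->
  (INR L - 8 / U) * (k' - k) <= counting_fun Λ k' - counting_fun Λ k
  <= (INR L + 8 / U) * (k' - k).
Proof.
  intros hk. unfold counting_fun.
  pose proof (lw_phase_lipschitz U (Λ - sin k') (Λ - sin k) hU) as hθ.
  replace (Λ - sin k' - (Λ - sin k)) with (- (sin k' - sin k)) in hθ by ring.
  rewrite Rabs_Ropp in hθ.
  pose proof (sin_lipschitz k k') as hs. rewrite (Rabs_right (k' - k)) in hs by lra.
  assert (h8 : 0 < 8 / U) by (apply Rdiv_lt_0_compat; lra).
  apply Rabs_le_between in hθ.
  assert (8 / U * Rabs (sin k' - sin k) <= 8 / U * (k' - k)) by (apply Rmult_le_compat_l; lra).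
  nra.
Qed.

Lemma counting_fun_lt Λ k k' : k < k' -> counting_fun Λ k < counting_fun Λ k'.
Proof. intros hk. pose proof (counting_fun_increment Λ k k' hk). nra. Qed.

Lemma counting_fun_inj Λ k k' : counting_fun Λ k = counting_fun Λ k' -> k = k'.
Proof.
  intros H. destruct (Rtotal_order k k') as [h | [h | h]]; [| exact h |].
  - pose proof (counting_fun_lt Λ _ _ h). lra.
  - pose proof (counting_fun_lt Λ _ _ h). lra.
Qed.

Lemma counting_fun_continuity Λ : continuity (counting_fun Λ).
Proof.
  apply (lipschitz_continuity _ (INR L + 8 / U)). intros x y.
  destruct (Rtotal_order x y) as [h | [-> | h]].
  - pose proof (counting_fun_increment Λ x y h).
    rewrite !Rabs_right by nra. nra.
  - rewrite !Rminus_diag, Rabs_R0. lra.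
  - pose proof (counting_fun_increment Λ y x h).
    rewrite (Rabs_minus_sym (counting_fun Λ y)), (Rabs_minus_sym y), !Rabs_right by nra. nra.
Qed.

Lemma counting_fun_decrement Λ Λ' k : Λ < Λ' ->
  0 < counting_fun Λ k - counting_fun Λ' k <= 8 / U * (Λ' - Λ).
Proof.
  intros hΛ. unfold counting_fun.
  pose proof (lw_phase_decrement U (Λ - sin k) (Λ' - sin k) hU ltac:(lra)) as hθ.
  replace (Λ' - sin k - (Λ - sin k)) with (Λ' - Λ) in hθ by ring. lra.
Qed.

Lemma counting_fun_open_cell Λ k m : counting_fun Λ k = 2 * PI * INR m -> in_open_cell L m k.
Proof.
  unfold counting_fun, in_open_cell. intros H.
  pose proof (lw_phase_bounds U (Λ - sin k)). lra.
Qed.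

(* At the ends of the closed cell m the counting function equals 2π(m-1) + θ and 2πm + θ',
   with θ, θ' in (0, 2π). *)
Lemma counting_fun_level Λ (m : nat) : exists k, counting_fun Λ k = 2 * PI * INR m.
Proof.
  pose proof INR_L_pos as hL.
  set (a := 2 * PI * (INR m - 1) / INR L). set (b := 2 * PI * INR m / INR L).
  apply (continuity_intermediate_value _ a b); [apply counting_fun_continuity |].
  unfold counting_fun.
  replace (a * INR L) with (2 * PI * (INR m - 1)) by (unfold a; field; lra).
  replace (b * INR L) with (2 * PI * INR m) by (unfold b; field; lra).
  pose proof (lw_phase_bounds U (Λ - sin a)). pose proof (lw_phase_bounds U (Λ - sin b)).
  lra.
Qed.

Definition cell_root (m : nat) (Λ : R) : R :=
  epsilon (inhabits 0) (fun k => counting_fun Λ k = 2 * PI * INR m).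

Lemma cell_root_spec m Λ : counting_fun Λ (cell_root m Λ) = 2 * PI * INR m.
Proof. unfold cell_root. apply epsilon_spec, counting_fun_level. Qed.

Lemma cell_root_unique m Λ k : counting_fun Λ k = 2 * PI * INR m -> k = cell_root m Λ.
Proof. intros H. apply (counting_fun_inj Λ). rewrite H, cell_root_spec. reflexivity. Qed.

Lemma cell_root_open_cell m Λ : in_open_cell L m (cell_root m Λ).
Proof. apply (counting_fun_open_cell Λ), cell_root_spec. Qed.

Lemma cell_root_increment m Λ Λ' : Λ < Λ' ->
  0 < cell_root m Λ' - cell_root m Λ <= 8 / U / (INR L - 8 / U) * (Λ' - Λ).
Proof.
  intros hΛ. set (k := cell_root m Λ). set (k' := cell_root m Λ').
  assert (hk : counting_fun Λ k = counting_fun Λ' k')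
    by (unfold k, k'; rewrite !cell_root_spec; reflexivity).
  pose proof (counting_fun_decrement Λ Λ' k hΛ) as hd.
  assert (hkk : k < k').
  { destruct (Rlt_or_le k k') as [h | h]; [exact h | exfalso].
    destruct (Rle_lt_or_eq_dec _ _ h) as [h' | h'].
    - pose proof (counting_fun_lt Λ' _ _ h'). lra.
    - rewrite <- h' in hd, hk. lra. }
  pose proof (counting_fun_increment Λ' k k' hkk).
  assert (hc : 0 < INR L - 8 / U) by lra.
  split; [lra |].
  replace (8 / U / (INR L - 8 / U) * (Λ' - Λ)) with (8 / U * (Λ' - Λ) / (INR L - 8 / U))
    by (unfold Rdiv; ring).
  apply Rle_div_r; [exact hc |]. nra.
Qed.

Lemma cell_root_continuity m : continuity (cell_root m).
Proof.
  apply (lipschitz_continuity _ (8 / U / (INR L - 8 / U))). intros x y.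
  assert (0 < 8 / U / (INR L - 8 / U)) by (apply Rdiv_lt_0_compat; [apply Rdiv_lt_0_compat |]; lra).
  destruct (Rtotal_order x y) as [h | [-> | h]].
  - pose proof (cell_root_increment m x y h). rewrite !Rabs_right by lra. lra.
  - rewrite !Rminus_diag, Rabs_R0. lra.
  - pose proof (cell_root_increment m y x h).
    rewrite (Rabs_minus_sym (cell_root m y)), (Rabs_minus_sym y), !Rabs_right by lra. lra.
Qed.


Definition cell_phase (m : nat) (Λ : R) : R := 2 * PI * INR m - cell_root m Λ * INR L.

Lemma cell_phase_lw_phase m Λ : cell_phase m Λ = lw_phase U (Λ - sin (cell_root m Λ)).
Proof. pose proof (cell_root_spec m Λ) as H. unfold counting_fun in H. unfold cell_phase. lra. Qed.

Lemma cell_phase_bounds m Λ : 0 < cell_phase m Λ < 2 * PI.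
Proof. rewrite cell_phase_lw_phase. apply lw_phase_bounds. Qed.

Lemma cell_phase_decreasing m Λ Λ' : Λ < Λ' -> cell_phase m Λ' < cell_phase m Λ.
Proof.
  intros hΛ. pose proof (cell_root_increment m Λ Λ' hΛ). pose proof INR_L_pos.
  unfold cell_phase. nra.
Qed.

Lemma cell_phase_continuity m : continuity (cell_phase m).
Proof.
  apply (continuity_minus (fun _ => 2 * PI * INR m) (fun Λ => cell_root m Λ * INR L)).
  - apply continuity_const. intros ? ?; reflexivity.
  - apply (continuity_mult (cell_root m) (fun _ => INR L)).
    + apply cell_root_continuity.
    + apply continuity_const. intros ? ?; reflexivity.
Qed.

Lemma cell_phase_small ε : 0 < ε -> exists Λ, forall m, cell_phase m Λ < ε.
Proof.
  intros hε. destruct (lw_phase_small U ε hU hε) as [A hA]. exists (A + 1). intros m.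
  rewrite cell_phase_lw_phase. apply hA. pose proof (SIN_bound (cell_root m (A + 1))). lra.
Qed.

Lemma cell_phase_large ε : 0 < ε -> exists Λ, forall m, 2 * PI - ε < cell_phase m Λ.
Proof.
  intros hε. destruct (lw_phase_large U ε hU hε) as [A hA]. exists (- A - 1). intros m.
  rewrite cell_phase_lw_phase. apply hA. pose proof (SIN_bound (cell_root m (- A - 1))). lra.
Qed.

Definition phase_sum (N : nat) (l : nat -> nat) (Λ : R) : R :=
  Rsum N (fun j => cell_phase (l j) Λ).

Lemma phase_sum_bounds N l Λ : (1 <= N)%nat -> 0 < phase_sum N l Λ < 2 * PI * INR N.
Proof.
  intros hN. unfold phase_sum. split.
  - replace 0 with (INR N * 0) by ring. rewrite <- Rsum_const.
    apply Rsum_lt; [exact hN |]. intros j _. apply cell_phase_bounds.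
  - rewrite Rmult_comm, <- Rsum_const.
    apply Rsum_lt; [exact hN |]. intros j _. apply cell_phase_bounds.
Qed.

Lemma phase_sum_decreasing N l Λ Λ' : (1 <= N)%nat -> Λ < Λ' ->
  phase_sum N l Λ' < phase_sum N l Λ.
Proof. intros hN hΛ. apply Rsum_lt; [exact hN |]. intros j _. apply cell_phase_decreasing, hΛ. Qed.

Lemma phase_sum_inj N l Λ Λ' : (1 <= N)%nat -> phase_sum N l Λ = phase_sum N l Λ' -> Λ = Λ'.
Proof.
  intros hN H. destruct (Rtotal_order Λ Λ') as [h | [h | h]]; [| exact h |].
  - pose proof (phase_sum_decreasing N l _ _ hN h). lra.
  - pose proof (phase_sum_decreasing N l _ _ hN h). lra.
Qed.

(* Far to the right every cell phase is below 2π/N, far to the left above 2π - 2π/N. *)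
Lemma phase_sum_level N l m : (1 <= m <= N - 1)%nat ->
  exists Λ, phase_sum N l Λ = 2 * PI * INR m.
Proof.
  intros hm. assert (hN : 1 <= INR N) by (apply (le_INR 1); lia).
  assert (hmN : 1 <= INR m <= INR N - 1).
  { split; [apply (le_INR 1); lia |].
    replace (INR N - 1) with (INR (N - 1)) by (rewrite minus_INR by lia; reflexivity).
    apply le_INR; lia. }
  assert (hε : 0 < 2 * PI / INR N) by (apply Rdiv_lt_0_compat; [apply Rgt_2PI_0 | lra]).
  destruct (cell_phase_small _ hε) as [Λhi hhi].
  destruct (cell_phase_large _ hε) as [Λlo hlo].
  apply (continuity_intermediate_value _ Λhi Λlo).
  { apply (Rsum_continuity N (fun j => cell_phase (l j))). intros j _. apply cell_phase_continuity. }
  pose proof PI_RGT_0. split.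
  - apply Rlt_le_trans with (Rsum N (fun _ => 2 * PI / INR N)).
    + apply Rsum_lt; [lia |]. intros j _. apply hhi.
    + rewrite Rsum_const. replace (INR N * (2 * PI / INR N)) with (2 * PI) by (field; lra). nra.
  - apply Rle_lt_trans with (Rsum N (fun _ => 2 * PI - 2 * PI / INR N)).
    + rewrite Rsum_const.
      replace (INR N * (2 * PI - 2 * PI / INR N)) with (2 * PI * (INR N - 1)) by (field; lra). nra.
    + apply Rsum_lt; [lia |]. intros j _. apply hlo.
Qed.

Lemma lw_equation_iff Λ k :
  expi (k * INR L) = lw_ratio U Λ k <-> exists z : Z, counting_fun Λ k = 2 * PI * IZR z.
Proof.
  rewrite lw_ratio_phase, expi_eq_iff by exact hU. unfold counting_fun.
  split; intros [z hz]; exists z; lra.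
Qed.

Lemma lw_product_iff N Λ (k : nat -> R) :
  Cprod N (fun j => lw_ratio U Λ (k j)) = RtoC 1 <->
  exists z : Z, Rsum N (fun j => lw_phase U (Λ - sin (k j))) = 2 * PI * IZR z.
Proof.
  rewrite (Cprod_ext N _ (fun j => expi (- lw_phase U (Λ - sin (k j)))))
    by (intros; apply lw_ratio_phase, hU).
  rewrite Cprod_expi, Rsum_opp.
  replace (RtoC 1) with (expi 0) by (unfold expi; rewrite cos_0, sin_0; reflexivity).
  rewrite expi_eq_iff. split; intros [z hz]; exists (- z)%Z; rewrite opp_IZR; lra.
Qed.

Lemma lw_equation_cell Λ k : expi (k * INR L) = lw_ratio U Λ k -> 0 <= k < 2 * PI ->
  (1 <= cell_index L k <= L)%nat /\ k = cell_root (cell_index L k) Λ.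
Proof.
  intros he hk. pose proof INR_L_pos as hL.
  apply lw_equation_iff in he as [z hz].
  pose proof (lw_phase_bounds U (Λ - sin k)). unfold counting_fun in hz.
  destruct (IZR_pos_INR z) as [m [hm1 hm]].
  { apply (Rmult_lt_reg_l (2 * PI)); [apply Rgt_2PI_0 | nra]. }
  rewrite hm in hz.
  assert (hmL : (m <= L)%nat).
  { apply Nat.lt_succ_r, INR_lt. rewrite S_INR.
    apply (Rmult_lt_reg_l (2 * PI)); [apply Rgt_2PI_0 | nra]. }
  assert (hc : in_open_cell L m k) by (apply (counting_fun_open_cell Λ), hz).
  rewrite (cell_index_open L m k hL hc). split; [lia |].
  apply cell_root_unique, hz.
Qed.

Lemma real_solution_cell_roots N l k Λ : real_solution L N U k Λ ->
  (forall j, (j < N)%nat -> in_open_cell L (l j) (k j)) ->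
  forall j, (j < N)%nat -> k j = cell_root (l j) Λ.
Proof.
  intros [hr [_ [he _]]] hc j hj.
  destruct (lw_equation_cell Λ (k j) (he j hj) (hr j hj)) as [_ hk].
  rewrite (cell_index_open L (l j) (k j) INR_L_pos (hc j hj)) in hk. exact hk.
Qed.

Lemma real_solution_phase_sum N l k Λ : (1 <= N)%nat -> real_solution L N U k Λ ->
  (forall j, (j < N)%nat -> k j = cell_root (l j) Λ) ->
  exists m, (1 <= m <= N - 1)%nat /\ phase_sum N l Λ = 2 * PI * INR m.
Proof.
  intros hN [_ [_ [_ hp]]] hk. apply lw_product_iff in hp as [z hz].
  rewrite (Rsum_ext N _ (fun j => cell_phase (l j) Λ)) in hz
    by (intros j hj; rewrite cell_phase_lw_phase, hk by exact hj; reflexivity).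
  fold (phase_sum N l Λ) in hz.
  pose proof (phase_sum_bounds N l Λ hN) as hb. rewrite hz in hb.
  pose proof Rgt_2PI_0.
  destruct (IZR_pos_INR z) as [m [hm1 hm]]; [nra |]. rewrite hm in hb, hz.
  exists m. split; [| exact hz]. split; [exact hm1 |].
  assert (m < N)%nat by (apply INR_lt, (Rmult_lt_reg_l (2 * PI)); lra). lia.
Qed.

Lemma cell_roots_real_solution N l Λ (m : nat) :
  (forall j, (j < N)%nat -> (1 <= l j <= L)%nat) ->
  (forall j j', (j < N)%nat -> (j' < N)%nat -> j <> j' -> l j <> l j') ->
  phase_sum N l Λ = 2 * PI * INR m ->
  real_solution L N U (fun j => cell_root (l j) Λ) Λ.
Proof.
  intros hl hinj hS. pose proof INR_L_pos as hL. split; [| split; [| split]].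
  - intros j hj. pose proof (open_cell_range L _ _ hL (hl j hj) (cell_root_open_cell (l j) Λ)). lra.
  - intros j j' hj hj' hne heq. apply (hinj j j' hj hj' hne).
    apply (open_cell_unique L _ _ (cell_root (l j') Λ) hL); [rewrite <- heq |];
      apply cell_root_open_cell.
  - intros j hj. apply lw_equation_iff. exists (Z.of_nat (l j)).
    rewrite <- INR_IZR_INZ. apply cell_root_spec.
  - apply lw_product_iff. exists (Z.of_nat m). rewrite <- INR_IZR_INZ, <- hS.
    apply Rsum_ext. intros j _. symmetry. apply cell_phase_lw_phase.
Qed.

Lemma lw_equation_open_cell Λ k : expi (k * INR L) = lw_ratio U Λ k -> 0 <= k < 2 * PI ->
  in_open_cell L (cell_index L k) k.
Proof.
  intros he hk. destruct (lw_equation_cell Λ k he hk) as [_ e].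
  rewrite e at 2. apply cell_root_open_cell.
Qed.

Theorem lw_solutions_in_cells N (l : nat -> nat) : (1 <= N)%nat ->
  (forall j, (j < N)%nat -> (1 <= l j <= L)%nat) ->
  (forall j j', (j < N)%nat -> (j' < N)%nat -> j <> j' -> l j <> l j') ->
  exists (ks : nat -> nat -> R) (Λs : nat -> R),
    (forall i, (i < N - 1)%nat -> real_solution L N U (ks i) (Λs i) /\
        forall j, (j < N)%nat -> in_open_cell L (l j) (ks i j)) /\
    (forall i i', (i < N - 1)%nat -> (i' < N - 1)%nat -> i <> i' -> Λs i <> Λs i') /\
    (forall k Λ, real_solution L N U k Λ ->
       (forall j, (j < N)%nat -> in_open_cell L (l j) (k j)) ->
       exists i, (i < N - 1)%nat /\ Λ = Λs i /\ forall j, (j < N)%nat -> k j = ks i j).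
Proof.
  intros hN hl hinj.
  set (Λs := fun i => epsilon (inhabits 0) (fun Λ => phase_sum N l Λ = 2 * PI * INR (S i))).
  assert (hΛs : forall i, (i < N - 1)%nat -> phase_sum N l (Λs i) = 2 * PI * INR (S i)).
  { intros i hi. apply epsilon_spec, phase_sum_level. lia. }
  exists (fun i j => cell_root (l j) (Λs i)), Λs. split; [| split].
  - intros i hi. split.
    + exact (cell_roots_real_solution N l _ (S i) hl hinj (hΛs i hi)).
    + intros j _. apply cell_root_open_cell.
  - intros i i' hi hi' hne heq. apply hne.
    pose proof (hΛs i hi) as e. rewrite heq, hΛs in e by exact hi'.
    pose proof Rgt_2PI_0. apply Nat.succ_inj, INR_eq. nra.
  - intros k Λ hsol hc.
    pose proof (real_solution_cell_roots N l k Λ hsol hc) as hk.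
    destruct (real_solution_phase_sum N l k Λ hN hsol hk) as [m [hm hS]].
    assert (hΛ : Λ = Λs (m - 1)%nat).
    { apply (phase_sum_inj N l _ _ hN). rewrite hS, hΛs by lia.
      replace (S (m - 1)) with m by lia. reflexivity. }
    exists (m - 1)%nat. split; [lia |]. split; [exact hΛ |].
    rewrite <- hΛ. exact hk.
Qed.

Lemma sorted_real_solution_cells N k Λ : sorted_real_solution L N U k Λ ->
  (forall j, (j < N)%nat -> (1 <= cell_index L (k j) <= L)%nat) /\
  (forall j, (S j < N)%nat -> (cell_index L (k j) < cell_index L (k (S j)))%nat).
Proof.
  intros [[hr [hd [he _]]] hs].
  assert (hcell : forall j, (j < N)%nat ->
    (1 <= cell_index L (k j) <= L)%nat /\ k j = cell_root (cell_index L (k j)) Λ)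
    by (intros j hj; apply lw_equation_cell; auto).
  split; [intros j hj; apply hcell, hj |].
  intros j hj.
  assert (hle : (cell_index L (k j) <= cell_index L (k (S j)))%nat).
  { apply (open_cell_le L _ _ (k j) (k (S j)) INR_L_pos (hs j hj));
      apply (lw_equation_open_cell Λ); [apply he | apply hr | apply he | apply hr]; lia. }
  destruct (Nat.eq_dec (cell_index L (k j)) (cell_index L (k (S j)))) as [heq | hne]; [| lia].
  exfalso. apply (hd j (S j)); [lia | exact hj | lia |].
  destruct (hcell j ltac:(lia)) as [_ e]. destruct (hcell (S j) hj) as [_ e'].
  rewrite e, e', heq. reflexivity.
Qed.

Lemma sorted_fibre_count N (l : nat -> nat) : (1 <= N)%nat ->
  (forall j, (j < N)%nat -> (1 <= l j <= L)%nat) ->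
  (forall j, (S j < N)%nat -> (l j < l (S j))%nat) ->
  has_exactly N (N - 1)
    (fun k Λ => sorted_real_solution L N U k Λ /\ forall j, (j < N)%nat -> cell_index L (k j) = l j).
Proof.
  intros hN hl hinc.
  assert (hinj : forall j j', (j < N)%nat -> (j' < N)%nat -> j <> j' -> l j <> l j').
  { intros j j' hj hj' hne.
    destruct (Nat.lt_total j j') as [h | [h | h]]; [| contradiction |].
    - pose proof (increasing_lt l N hinc j j' h hj'). lia.
    - pose proof (increasing_lt l N hinc j' j h hj). lia. }
  destruct (lw_solutions_in_cells N l hN hl hinj) as [ks [Λs [hsol [hdist hall]]]].
  exists ks, Λs. split; [| split].
  - intros i hi. destruct (hsol i hi) as [hr hc]. split; [split; [exact hr |] |].
    + intros j hj. apply (open_cell_lt L (l j) (l (S j))); [exact INR_L_pos | apply hinc, hj | apply hc; lia | apply hc, hj].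
    + intros j hj. apply cell_index_open; [exact INR_L_pos | apply hc, hj].
  - intros i i' hi hi' hne [heq _]. exact (hdist i i' hi hi' hne heq).
  - intros k Λ [[hr _] hci]. apply hall; [exact hr |].
    intros j hj. rewrite <- (hci j hj). destruct hr as [hrange [_ [he _]]].
    apply (lw_equation_open_cell Λ); auto.
Qed.

End OneDownSpin.

(** * Counting solutions by their cells *)

Lemma has_exactly_iff N n (P Q : (nat -> R) -> R -> Prop) :
  (forall k Λ, P k Λ <-> Q k Λ) -> has_exactly N n P -> has_exactly N n Q.
Proof.
  intros hPQ [ks [Λs [hsol [hdist hall]]]]. exists ks, Λs. split; [| split]; [| exact hdist |].
  - intros i hi. apply hPQ, hsol, hi.
  - intros k Λ hq. apply hall, hPQ, hq.
Qed.

Lemma has_exactly_empty N (P : (nat -> R) -> R -> Prop) :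
  (forall k Λ, ~ P k Λ) -> has_exactly N 0 P.
Proof.
  intros h. exists (fun _ _ => 0), (fun _ => 0). split; [| split].
  - intros i hi. lia.
  - intros i i' hi. lia.
  - intros k Λ hp. destruct (h k Λ hp).
Qed.

Lemma has_exactly_disjoint_union N a b (P Q : (nat -> R) -> R -> Prop) :
  has_exactly N a P -> has_exactly N b Q ->
  (forall k k' Λ, (forall j, (j < N)%nat -> k j = k' j) -> P k Λ -> Q k' Λ -> False) ->
  has_exactly N (a + b) (fun k Λ => P k Λ \/ Q k Λ).
Proof.
  intros [ks1 [Λs1 [p1 [d1 c1]]]] [ks2 [Λs2 [p2 [d2 c2]]]] hdis.
  exists (fun i => if Nat.ltb i a then ks1 i else ks2 (i - a)%nat),
         (fun i => if Nat.ltb i a then Λs1 i else Λs2 (i - a)%nat).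
  split; [| split].
  - intros i hi. destruct (Nat.ltb_spec i a).
    + left. apply p1. assumption.
    + right. apply p2. lia.
  - intros i i' hi hi' hne [hΛ hk].
    destruct (Nat.ltb_spec i a) as [h | h]; destruct (Nat.ltb_spec i' a) as [h' | h'].
    + exact (d1 i i' h h' hne (conj hΛ hk)).
    + apply (hdis (ks1 i) (ks2 (i' - a)%nat) (Λs1 i) hk (p1 i h)).
      rewrite hΛ. apply p2. lia.
    + apply (hdis (ks1 i') (ks2 (i - a)%nat) (Λs1 i')); [| apply p1, h' |].
      * intros j hj. symmetry. apply hk, hj.
      * rewrite <- hΛ. apply p2. lia.
    + apply (d2 (i - a)%nat (i' - a)%nat); [lia | lia | lia | split; assumption].
  - intros k Λ [hp | hq].
    + destruct (c1 k Λ hp) as [i [hi e]]. exists i. split; [lia |].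
      destruct (Nat.ltb_spec i a); [exact e | lia].
    + destruct (c2 k Λ hq) as [i [hi e]]. exists (a + i)%nat. split; [lia |].
      destruct (Nat.ltb_spec (a + i) a); [lia |].
      replace (a + i - a)%nat with i by lia. exact e.
Qed.

Section CountingByCells.

Variables (N K c : nat) (P : (nat -> R) -> R -> Prop) (cell : R -> nat).

Hypothesis P_cells : forall k Λ, P k Λ ->
  (forall j, (j < N)%nat -> (1 <= cell (k j) <= K)%nat) /\
  (forall j, (S j < N)%nat -> (cell (k j) < cell (k (S j)))%nat).

Hypothesis fibre_count : forall l : nat -> nat,
  (forall j, (j < N)%nat -> (1 <= l j <= K)%nat) ->
  (forall j, (S j < N)%nat -> (l j < l (S j))%nat) ->
  has_exactly N c (fun k Λ => P k Λ /\ forall j, (j < N)%nat -> cell (k j) = l j).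

Definition partial_fibre (M n : nat) (t : nat -> nat) (k : nat -> R) (Λ : R) : Prop :=
  P k Λ /\ (forall j, (j < n)%nat -> (cell (k j) <= M)%nat) /\
  (forall j, (n <= j < N)%nat -> cell (k j) = t j).

(* Pascal's rule: the n-th cell is either M + 1 or at most M. *)
Lemma partial_fibre_split M n t k Λ : (n < N)%nat ->
  partial_fibre (S M) (S n) t k Λ <->
  partial_fibre M (S n) t k Λ \/
  partial_fibre M n (fun j => if Nat.eqb j n then S M else t j) k Λ.
Proof.
  intros hn. split.
  - intros [hP [hlo hhi]].
    assert (hlt : forall j, (j < n)%nat -> (cell (k j) < cell (k n))%nat)
      by (intros j hj; exact (increasing_lt (fun i => cell (k i)) N (proj2 (P_cells k Λ hP)) j n hj hn)).
    destruct (Nat.eq_dec (cell (k n)) (S M)) as [e | ne].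
    + right. split; [exact hP | split].
      * intros j hj. specialize (hlt j hj). lia.
      * intros j hj. destruct (Nat.eqb_spec j n) as [-> | ne]; [exact e | apply hhi; lia].
    + left. split; [exact hP | split; [| exact hhi]].
      intros j hj. specialize (hlo n ltac:(lia)).
      destruct (Nat.eq_dec j n) as [-> | ne']; [lia |]. specialize (hlt j ltac:(lia)). lia.
  - intros [[hP [hlo hhi]] | [hP [hlo hhi]]]; split; [exact hP | split | exact hP | split].
    + intros j hj. specialize (hlo j hj). lia.
    + exact hhi.
    + intros j hj. destruct (Nat.eq_dec j n) as [-> | ne].
      * specialize (hhi n ltac:(lia)). rewrite Nat.eqb_refl in hhi. lia.
      * specialize (hlo j ltac:(lia)). lia.
    + intros j hj. specialize (hhi j ltac:(lia)).
      destruct (Nat.eqb_spec j n); [lia | exact hhi].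
Qed.

Lemma partial_fibre_disjoint M n t k k' Λ : (n < N)%nat ->
  (forall j, (j < N)%nat -> k j = k' j) ->
  partial_fibre M (S n) t k Λ ->
  partial_fibre M n (fun j => if Nat.eqb j n then S M else t j) k' Λ -> False.
Proof.
  intros hn hk [_ [hlo _]] [_ [_ hhi]].
  specialize (hlo n ltac:(lia)). specialize (hhi n ltac:(lia)).
  rewrite Nat.eqb_refl, <- hk in hhi by exact hn. lia.
Qed.

Lemma partial_fibre_base M t :
  (forall j, (j < N)%nat -> (M < t j <= K)%nat) ->
  (forall j, (S j < N)%nat -> (t j < t (S j))%nat) ->
  has_exactly N c (partial_fibre M 0 t).
Proof.
  intros ht hinc.
  apply (has_exactly_iff N c (fun k Λ => P k Λ /\ forall j, (j < N)%nat -> cell (k j) = t j)).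
  - intros k Λ. unfold partial_fibre. split.
    + intros [hP hc]. split; [exact hP | split; [intros j hj; lia | intros j hj; apply hc; lia]].
    + intros [hP [_ hc]]. split; [exact hP | intros j hj; apply hc; lia].
  - apply fibre_count; [intros j hj; specialize (ht j hj); lia | exact hinc].
Qed.

Lemma partial_fibre_count M : (M <= K)%nat -> forall n t, (n <= N)%nat ->
  (forall j, (n <= j < N)%nat -> (M < t j <= K)%nat) ->
  (forall j, (n <= j)%nat -> (S j < N)%nat -> (t j < t (S j))%nat) ->
  has_exactly N (binomial.binomial M n * c) (partial_fibre M n t).
Proof.
  induction M as [| M IH]; intros hM n t hn ht hinc; destruct n as [| n].
  1, 3: rewrite binomial.bin0, Nat.mul_1_l; apply partial_fibre_base;
    [intros j hj; apply ht; lia | intros j; apply hinc; lia].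
  - apply has_exactly_empty. intros k Λ [hP [hlo _]].
    destruct (P_cells k Λ hP) as [hrange _].
    specialize (hlo 0%nat ltac:(lia)). specialize (hrange 0%nat ltac:(lia)). lia.
  - rewrite binomial.binS. change (ssrnat.addn ?a ?b) with (a + b)%nat. rewrite Nat.mul_add_distr_r.
    apply (has_exactly_iff N _ (fun k Λ => partial_fibre M (S n) t k Λ \/
      partial_fibre M n (fun j => if Nat.eqb j n then S M else t j) k Λ)).
    { intros k Λ. symmetry. apply partial_fibre_split. lia. }
    apply has_exactly_disjoint_union.
    + apply IH; [lia | exact hn | | exact hinc]. intros j hj. specialize (ht j hj). lia.
    + apply IH; [lia | lia | |].
      * intros j hj. destruct (Nat.eqb_spec j n); [lia |]. specialize (ht j ltac:(lia)). lia.
      * intros j hj hjN. destruct (Nat.eqb_spec j n); destruct (Nat.eqb_spec (S j) n); try lia.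
        -- subst j. specialize (ht (S n) ltac:(lia)). lia.
        -- apply hinc; lia.
    + intros k k' Λ. apply partial_fibre_disjoint. lia.
Qed.

Theorem has_exactly_by_cells : has_exactly N (binomial.binomial K N * c) P.
Proof.
  apply (has_exactly_iff N _ (partial_fibre K N (fun _ => 0%nat))).
  - intros k Λ. split; [intros [hP _]; exact hP |].
    intros hP. split; [exact hP | split; [| intros j hj; lia]].
    intros j hj. apply (P_cells k Λ hP), hj.
  - apply partial_fibre_count; intros; lia.
Qed.

End CountingByCells.

Theorem mainTheorem2 (L N : nat) (U : R)
  (hN : (1 <= N)%nat) (hNL : (N <= L)%nat)
  (hU : 0 < U) (hLU : 8 / U < INR L) :
  (* total count of real solutions modulo permutations *)
  has_exactly N (binomial.binomial L N * (N - 1))%nat (sorted_real_solution L N U)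
  /\
  (* for every choice of N mutually distinct intervals I_{l_0},...,I_{l_{N-1}} *)
  (forall l : nat -> nat,
     (forall j, (j < N)%nat -> (1 <= l j <= L)%nat) ->
     (forall j j', (j < N)%nat -> (j' < N)%nat -> j <> j' -> l j <> l j') ->
     exists (ks : nat -> nat -> R) (Λs : nat -> R),
       (* N-1 solutions with k_j in I_{l_j} ... *)
       (forall i, (i < N - 1)%nat ->
          real_solution L N U (ks i) (Λs i) /\
          forall j, (j < N)%nat -> in_interval L (l j) (ks i j)) /\
       (* ... with N-1 different values of Λ ... *)
       (forall i i', (i < N - 1)%nat -> (i' < N - 1)%nat -> i <> i' -> Λs i <> Λs i') /\
       (* ... and there are no others *)
       (forall k Λ, real_solution L N U k Λ ->
          (forall j, (j < N)%nat -> in_interval L (l j) (k j)) ->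
          exists i, (i < N - 1)%nat /\ Λ = Λs i /\
                    forall j, (j < N)%nat -> k j = ks i j)).
Proof.
  pose proof (INR_L_pos L U hU hLU) as hL.
  split.
  - apply (has_exactly_by_cells N L (N - 1) _ (cell_index L)).
    + intros k Λ. apply (sorted_real_solution_cells L U hU hLU).
    + intros l. apply (sorted_fibre_count L U hU hLU N l hN).
  - intros l hl hinj.
    destruct (lw_solutions_in_cells L U hU hLU N l hN hl hinj) as [ks [Λs [hsol [hdist hall]]]].
    exists ks, Λs. split; [| split; [exact hdist |]].
    + intros i hi. destruct (hsol i hi) as [hr hc]. split; [exact hr |].
      intros j hj. apply open_cell_in_interval; [exact hL | apply hc, hj].
    + intros k Λ hr hI. apply hall; [exact hr |]. intros j hj.
      destruct hr as [hrange [_ [he _]]].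
      pose proof (lw_equation_open_cell L U hU hLU Λ (k j) (he j hj) (hrange j hj)) as hc.
      rewrite (in_interval_open_cell L _ _ _ hL (hI j hj) hc). exact hc.
Qed.
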